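(* For integers $n\ge k\ge1$ let $A_{n,k}=\{(a_1,\dots,a_k)\in\mathbb Z^k:a_1,\dots,a_k\ge1,\ \sum_{i=1}^ka_i=n\}$ and $S_{n,k}=\sum_{(a_1,\dots,a_k)\in A_{n,k}}\prod_{i=1}^k\frac1{a_i}$. Then $$S_{n,k}\le\frac{(3\log(n+1))^{k-1}}{n}\quad\text{for all }n\ge k\ge1.$$ *)

From mathcomp Require Import all_boot all_order all_algebra.
From mathcomp Require Import all_classical all_reals all_analysis.
Set Implicit Arguments. Unset Strict Implicit. Unset Printing Implicit Defensive.
Import Order.TTheory GRing.Theory Num.Theory.
Local Open Scope ring_scope.

(* Compositions of n into k positive parts: a : 'I_k -> {0..n}, each a_i >= 1,
   sum a_i = n.  (Every composition has parts <= n, so the 'I_n.+1 bound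
   loses nothing.) *)
Definition A_nk (n k : nat) : {set {ffun 'I_k -> 'I_n.+1}} :=
  [set a : {ffun 'I_k -> 'I_n.+1} | [forall i, (0 < (a i : nat))%N] && ((\sum_(i < k) (a i : nat))%N == n)].

Definition S_nk (R : realType) (n k : nat) : R :=
  \sum_(a in A_nk n k) \prod_(i < k) ((a i : nat)%:R)^-1.

From mathcomp Require Import all_boot all_order all_algebra.
From mathcomp Require Import all_classical all_reals all_analysis.
From mathcomp Require Import zify ring lra.
Import Order.TTheory GRing.Theory Num.Theory.
Local Open Scope ring_scope.

(* Write n = a_1 + ... + a_k inside n S_{n,k}: the j-th resulting sum is
   Σ_a Π_{i≠j} 1/a_i.  A composition is determined by its parts off j, and
   these lie in [1, n-1], so that sum is at most H_{n-1}^{k-1}.  Hence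
   n S_{n,k} <= k H_{n-1}^{k-1} <= (2 H_{n-1})^{k-1}, and
   2 H_{n-1} <= 3 (H_{n+1} - 1) <= 3 log (n+1). *)

Lemma sum_prod_off_le (R : numDomainType) (I J : finType) (j : I)
    (P : {pred {ffun I -> J}}) (Q : I -> pred J) (F : I -> J -> R) :
    (forall i x, 0 <= F i x) ->
    {in P, forall f : {ffun I -> J}, forall i, i != j -> Q i (f i)} ->
    {in P &, forall f g : {ffun I -> J},
      (forall i, i != j -> f i = g i) -> f = g} ->
  \sum_(f in P) \prod_(i | i != j) F i (f i)
    <= \prod_(i | i != j) \sum_(x | Q i x) F i x.
Proof.
move=> F_ge0 PQ P_inj.
have [f0 Pf0 | P0] := pickP [in P]; last first.
  by rewrite [leLHS]big_pred0 //; apply: prodr_ge0 => i _; apply: sumr_ge0.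
pose reset (f : {ffun I -> J}) := [ffun i => if i == j then f0 j else f i].
have reset_off f i : i != j -> reset f i = f i by rewrite ffunE => /negbTE ->.
have reset_inj : {in P &, injective reset}.
  move=> f g Pf Pg efg; apply: P_inj => // i ij.
  by rewrite -(reset_off f) // -(reset_off g) // efg.
have reset_fam : {in P, forall f, reset f \in pfamily (f0 j) (predC1 j) Q}.
  move=> f Pf; apply/familyP => i; rewrite !inE ffunE.
  by case: eqP => [_|/eqP ij] /=; [rewrite inE | exact: PQ].
rewrite (big_distr_big_dep (f0 j)) /=.
rewrite (eq_bigr (fun f => \prod_(i | i != j) F i (reset f i))); last first.
  by move=> f _; apply: eq_bigr => i /reset_off ->.
rewrite -(big_imset (fun f : {ffun I -> J} => \prod_(i | i != j) F i (f i))
  reset_inj) /= [leRHS](bigID [in reset @: P]) /=.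
rewrite [X in _ <= X + _](eq_bigl [in reset @: P]) ?lerDl; last first.
  by move=> f; apply/andb_idl => /imsetP[g Pg ->]; apply: reset_fam.
by apply: sumr_ge0 => f _; apply: prodr_ge0.
Qed.

Definition harmonic_number {R : numFieldType} (m : nat) : R :=
  \sum_(i < m) i.+1%:R^-1.

Lemma harmonic_numberS (R : numFieldType) m :
  harmonic_number m.+1 = harmonic_number m + m.+1%:R^-1 :> R.
Proof. by rewrite /harmonic_number big_ord_recr. Qed.

Lemma harmonic_number_ge0 (R : numFieldType) m : 0 <= harmonic_number m :> R.
Proof. by apply: sumr_ge0 => i _; rewrite invr_ge0. Qed.

(* The term [x = 0] vanishes because [0^-1 = 0]. *)
Lemma sum_inv_ord (R : numFieldType) m :
  \sum_(x < m) (x%:R : R)^-1 = harmonic_number m.-1.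
Proof.
case: m => [|m]; first by rewrite /harmonic_number !big_ord0.
by rewrite big_ord_recl invr0 add0r.
Qed.

Lemma harmonic_number_le_1Dln (R : realType) m :
  harmonic_number m.+1 <= 1 + ln (m.+1%:R : R).
Proof.
elim: m => [|m IH].
  by rewrite /harmonic_number big_ord_recr big_ord0 ln1 /=; lra.
have m1_gt0 : (0 : R) < m.+1%:R by rewrite ltr0n.
have m2_gt0 : (0 : R) < m.+2%:R by rewrite ltr0n.
have inv_lt1 : - 1 < - (m.+2%:R : R)^-1 by rewrite ltrN2 invf_lt1 ?ltr1n.
have ln_ratio : ln (m.+1%:R / m.+2%:R) <= - (m.+2%:R : R)^-1.
  have -> : (m.+1%:R / m.+2%:R : R) = 1 - m.+2%:R^-1.
    by field; rewrite -natrD pnatr_eq0.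
  exact: le_ln1Dx.
rewrite harmonic_numberS; move: ln_ratio IH; rewrite ln_div ?posrE //.
by move: (m.+2%:R^-1) => c; lra.
Qed.

Lemma twice_harmonic_number_le (R : realFieldType) m : (1 <= m)%N ->
  2 * harmonic_number m <= 3 * (harmonic_number m.+2 - 1) :> R.
Proof.
have step m' : (3 <= m')%N -> 2 / m'.+1%:R <= 3 / (m'.+3%:R : R).
  move=> m'_ge3; rewrite ler_pdivlMr ?ltr0n // mulrAC ler_pdivrMr ?ltr0n //.
  by rewrite -!natrM ler_nat; lia.
(* Check m = 1, 2, 3 numerically; beyond that [step] makes the gap grow. *)
case: m => [//|[_|[_|m _]]]; last elim: m => [|m IH];
  try by rewrite /harmonic_number !big_ord_recr big_ord0 /=; lra.
rewrite (harmonic_numberS _ m.+3) (harmonic_numberS _ m.+1.+4).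
by move: IH (step m.+3 isT); move: (m.+4%:R^-1) (m.+2.+4%:R^-1) => x y; lra.
Qed.

Lemma twice_harmonic_number_le_ln (R : realType) m : (1 <= m)%N ->
  2 * harmonic_number m <= 3 * ln (m.+2%:R : R).
Proof.
move=> m_gt0; apply: le_trans (twice_harmonic_number_le R m m_gt0) _.
by rewrite ler_pM2l // lerBlDl harmonic_number_le_1Dln.
Qed.

Section Compositions.
Variables n k : nat.

Lemma A_nkP (a : {ffun 'I_k -> 'I_n.+1}) :
  reflect ((forall i, 0 < a i)%N /\ (\sum_i a i)%N = n) (a \in A_nk n k).
Proof. by rewrite inE; apply: (iffP andP) => -[/forallP a_gt0 /eqP]. Qed.

Lemma A_nk_part_lt a i j : a \in A_nk n k -> i != j -> (a i < n)%N.
Proof.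
case/A_nkP => a_gt0 sum_a ij; rewrite -[X in (_ < X)%N]sum_a.
have ji : j != i by rewrite eq_sym.
rewrite (bigD1 i) //= (bigD1 j ji) /= -addn1 leq_add2l.
exact: leq_trans (a_gt0 j) (leq_addr _ _).
Qed.

Lemma A_nk_eq_off a b j : a \in A_nk n k -> b \in A_nk n k ->
  (forall i, i != j -> a i = b i) -> a = b.
Proof.
case/A_nkP => _ sum_a /A_nkP[_ sum_b] eq_off; apply/ffunP => i.
have [->|ij] := eqVneq i j; last exact: eq_off.
have sum_off : (\sum_(i | i != j) a i = \sum_(i | i != j) b i)%N.
  by apply: eq_bigr => l /eq_off ->.
rewrite (bigD1 j) //= sum_off in sum_a; rewrite (bigD1 j) //= in sum_b.
by apply/val_inj/eqP; rewrite -(eqn_add2r (\sum_(i | i != j) b i)) sum_a sum_b.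
Qed.

Lemma sum_prod_inv_off_le (R : numFieldType) j :
  \sum_(a in A_nk n k) \prod_(i | i != j) ((a i)%:R : R)^-1
    <= harmonic_number n.-1 ^+ k.-1.
Proof.
have -> : harmonic_number n.-1 ^+ k.-1
    = \prod_(i | i != j) \sum_(x < n.+1 | (x < n)%N) (x%:R : R)^-1.
  rewrite -(big_ord_widen _ (fun x => (x%:R : R)^-1) (leqnSn n)) sum_inv_ord.
  by rewrite prodr_const cardC1 card_ord.
apply: sum_prod_off_le => [i x|a aA i|a b aA bA];
  [by rewrite invr_ge0 | exact: A_nk_part_lt | exact: A_nk_eq_off].
Qed.

End Compositions.

Lemma natr_mul_S_nk_le (R : realType) n k :
  n%:R * S_nk R n k <= k%:R * harmonic_number n.-1 ^+ k.-1.
Proof.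
have split_n a : a \in A_nk n k ->
    n%:R * \prod_i ((a i)%:R)^-1 = \sum_j \prod_(i | i != j) ((a i)%:R : R)^-1.
  case/A_nkP => a_gt0 sum_a; rewrite -[X in X%:R * _]sum_a natr_sum mulr_suml.
  apply: eq_bigr => j _.
  by rewrite (bigD1 j) //= mulrA mulfV ?mul1r // pnatr_eq0 -lt0n.
rewrite /S_nk mulr_sumr (eq_bigr _ split_n) exchange_big /=.
apply: le_trans (ler_sum _ (fun j _ => sum_prod_inv_off_le n k R j)) _.
by rewrite sumr_const card_ord mulr_natl.
Qed.

Theorem lemma9p1 (R : realType) (n k : nat) (hk : (1 <= k)%N) (hkn : (k <= n)%N) :
  S_nk R n k <= (3 * ln (n.+1%:R : R)) ^+ k.-1 / n%:R.
Proof.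
have n_gt0 : (0 < n)%N := leq_trans hk hkn.
rewrite ler_pdivlMr ?ltr0n // mulrC.
apply: le_trans (natr_mul_S_nk_le R n k) _.
case: k hk hkn => [//|[_ _|k _ hkn]]; first by rewrite !expr0 mulr1.
have k_le_pow2 : (k.+2%:R : R) <= 2 ^+ k.+1.
  by rewrite -natrX ler_nat ltn_expl.
apply: le_trans (ler_wpM2r (exprn_ge0 _ (harmonic_number_ge0 _ _)) k_le_pow2) _.
rewrite -exprMn lerXn2r ?nnegrE ?mulr_ge0 ?harmonic_number_ge0 ?ln_ge0 ?ler1n //.
have n1_gt0 : (0 < n.-1)%N by rewrite -ltnS prednK // (leq_trans _ hkn).
by have := twice_harmonic_number_le_ln R _ n1_gt0; rewrite prednK.
Qed.
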